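(* Let $(\mathbb{F}(t),\sigma)$ be a $\Pi\Sigma$-extension of a difference field $(\mathbb{F},\sigma)$, and let $A=A_\ell\sigma^\ell+\dots+A_1\sigma+A_0\in\mathbb{F}(t)[\sigma]^{n\times n}$ with $A_0,\dots,A_\ell\in\mathbb{F}(t)^{n\times n}$ and $\det A_\ell\ne0$. Then there exist $\tilde\ell\in\mathbb{N}$ and a unimodular $V\in\mathrm{GL}_n(\mathbb{F}(t)[\sigma,\sigma^{-1}])$ such that $VA=\sum_{i=0}^{\tilde\ell}B_i\sigma^i\in\mathbb{F}(t)[\sigma]^{n\times n}$ with $\det B_0\ne0$. Consequently every head regular system $A(y)=b$ is fully regular.
   Context: A difference field $(\mathbb{F},\sigma)$ is a field (containing $\mathbb{Q}$) with an automorphism $\sigma$; in a $\Pi\Sigma$-extension $(\mathbb{F}(t),\sigma)$, $\sigma$ extends to the rational function field with $\sigma(t)=t+\beta$ or $\sigma(t)=\alpha t$ ($\alpha,\beta\in\mathbb{F}\setminus\{0\}$) and no new constants. $\mathbb{F}(t)[\sigma]$ is the Ore polynomial ring of polynomials $\sum a_i\sigma^i$ ($a_i\in\mathbb{F}(t)$) with multiplication determined by $\sigma a=\sigma(a)\sigma$; $\mathbb{F}(t)[\sigma,\sigma^{-1}]$ is its localisation at powers of $\sigma$. Unimodular means having a two-sided inverse over the same ring. A square system $A(y)=b$, $A=\sum_{i=0}^\ell A_i\sigma^i$, is head regular if $\det A_\ell\ne0$, and fully regular if it is head regular and there is a unimodular $V$ over $\mathbb{F}(t)[\sigma,\sigma^{-1}]$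 with $VA\in\mathbb{F}(t)[\sigma]^{n\times n}$ whose coefficient of $\sigma^0$ has nonzero determinant. *)

From HB Require Import structures.
From mathcomp Require Import all_boot all_order all_algebra.
Set Implicit Arguments. Unset Strict Implicit. Unset Printing Implicit Defensive.
Import Order.TTheory GRing.Theory Num.Theory.
Local Open Scope ring_scope.

Notation ratfun F := {fraction {poly F}}.

Definition constF (F : fieldType) (c : F) : ratfun F := FracField.tofrac c%:P.
Definition tvar (F : fieldType) : ratfun F := FracField.tofrac 'X.

Definition difference_field (F : fieldType) (sigma0 sigma0i : {rmorphism F -> F}) :=
  [pchar F] =i pred0 /\ cancel sigma0 sigma0i /\ cancel sigma0i sigma0.

(* (F(t), sigma) is a PiSigma-extension of (F, sigma0): sigma is an automorphism
   of F(t) (inverse sigmai) extending sigma0, with sigma(t) = t + beta (Sigma case)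
   or sigma(t) = alpha * t (Pi case), alpha, beta in F \ {0}, and no new constants. *)
Definition PiSigma_ext (F : fieldType) (sigma0 : {rmorphism F -> F})
    (sigma sigmai : {rmorphism ratfun F -> ratfun F}) :=
  [/\ cancel sigma sigmai, cancel sigmai sigma,
      (forall c : F, sigma (constF c) = constF (sigma0 c)),
      (exists2 beta : F, beta != 0 & sigma (tvar F) = tvar F + constF beta) \/
      (exists2 alpha : F, alpha != 0 & sigma (tvar F) = constF alpha * tvar F)
    & (forall x : ratfun F, sigma x = x -> exists2 c : F, sigma0 c = c & x = constF c)].

Section OreMatrices.
Variables (K : fieldType) (sigma sigmai : K -> K) (n : nat).

Definition spow (k : int) : K -> K :=
  match k with
  | Posz m => iter m sigma
  | Negz m => iter m.+1 sigmai
  end.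

(* An element sum_{i} M_i sigma^(lo + i) of K[sigma, sigma^-1]^(n x n),
   given by its lowest exponent lo and coefficient list. *)
Record lmat := LMat { lm_lo : int; lm_cf : seq 'M[K]_n }.

Definition lcoef (L : lmat) (k : int) : 'M[K]_n :=
  if (lm_lo L <= k) then nth 0 (lm_cf L) `|k - lm_lo L|%N else 0.

Definition ore_mat (A : seq 'M[K]_n) : lmat := LMat 0 A.

(* Coefficient of sigma^k in the Ore product V * W, using
   (M sigma^i)(N sigma^j) = M sigma^i(N) sigma^(i+j). *)
Definition lmul_coef (V W : lmat) (k : int) : 'M[K]_n :=
  \sum_(i < size (lm_cf V))
     nth 0 (lm_cf V) i *m map_mx (spow (lm_lo V + i%:Z)) (lcoef W (k - (lm_lo V + i%:Z))).

Definition lone_coef (k : int) : 'M[K]_n := if k == 0 then 1%:M else 0.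

Definition unimodular (V : lmat) :=
  exists W : lmat, (forall k, lmul_coef V W k = lone_coef k) /\
                   (forall k, lmul_coef W V k = lone_coef k).

End OreMatrices.

From HB Require Import structures.
From mathcomp Require Import all_boot all_order all_algebra.
From mathcomp Require Import zify.

(* Start from [V = 1] and maintain a unimodular [V] such
   that [V A] involves no negative powers of [sigma] and its row [a] has degree
   at most [t a].  If the constant coefficient [B_0] of [V A] is singular,
   pick [c] with [c B_0 = 0] and an index [i] with [c_i != 0] and [t i]
   maximal.  Replacing row [i] by the combination [c] of the rows is
   unimodular, kills the constant term of that row and keeps its degree below
   [t i]; multiplying the row by [sigma^-1] then lowers its degree by one.
   That row cannot vanish, since [A] is left regular by [det A_l != 0], so
   [t i > 0] and the measure [sum_a t a] strictly decreases. *)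

Set Implicit Arguments. Unset Strict Implicit. Unset Printing Implicit Defensive.
Import Order.TTheory GRing.Theory Num.Theory.
Local Open Scope ring_scope.

Section IterRmorph.
Context {R : nzRingType}.

Fixpoint iter_rmorph (f : {rmorphism R -> R}) (m : nat) : {rmorphism R -> R} :=
  if m is m'.+1 then (f \o iter_rmorph f m')%FUN else idfun.

Lemma iter_rmorphE f m x : iter_rmorph f m x = iter m f x.
Proof. by elim: m => //= m ->. Qed.

End IterRmorph.

Section WindowSums.
Context {V : nmodType}.
Implicit Types (P : int -> V) (a b : int) (N : nat).

Definition wsum a N P : V := \sum_(i < N) P (a + i%:Z).

Definition supported_in a N P := forall k, ~~ (a <= k < a + N%:Z) -> P k = 0.

Lemma wsum_widen a N a' N' P : supported_in a N P ->
  a' <= a -> a + N%:Z <= a' + N'%:Z -> wsum a' N' P = wsum a N P.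
Proof.
move=> suppP le_a'a le_aN.
set d := `|a - a'|%N; have -> : N' = (d + (N + (N' - d - N)))%N by rewrite /d; lia.
rewrite /wsum big_split_ord /= big1 ?add0r => [|i _]; last first.
  by rewrite suppP //=; move: (ltn_ord i); rewrite /d; lia.
rewrite big_split_ord /= [X in _ + X]big1 ?addr0 => [|i _]; last first.
  by rewrite suppP //= /d; lia.
by apply: eq_bigr => i _; congr P; rewrite /d; lia.
Qed.

Lemma wsum_supported a N b N' P :
  supported_in a N P -> supported_in b N' P -> wsum a N P = wsum b N' P.
Proof.
move=> suppa suppb; set c := a - `|a - b|%N%:Z; set L := (N + N' + 2 * `|a - b|)%N.
by rewrite -(@wsum_widen a N c L) ?(@wsum_widen b N' c L) // /c /L; lia.
Qed.

Lemma wsum_single a N e P : a <= e < a + N%:Z ->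
  (forall j, j != e -> P j = 0) -> wsum a N P = P e.
Proof.
move=> e_in P_e; rewrite (@wsum_widen e 1) ?/wsum ?big_ord1 ?addr0 //; try lia.
by move=> j j_out; apply: P_e; move: j_out; lia.
Qed.

Lemma eq_wsum a N P Q : P =1 Q -> wsum a N P = wsum a N Q.
Proof. by move=> eqPQ; apply: eq_bigr => i _. Qed.

Lemma wsumD a N P Q : wsum a N (fun j => P j + Q j) = wsum a N P + wsum a N Q.
Proof. exact: big_split. Qed.

End WindowSums.

Section RowOperations.
Context {R : fieldType} {n : nat} (i : 'I_n).
Implicit Types (Y : 'M[R]_n) (c : 'rV[R]_n).

Lemma mul_delta_diagE Y a b : (delta_mx i i *m Y) a b = if a == i then Y i b else 0.
Proof.
rewrite mxE; case: eqP => [->|ai]; last first.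
  by rewrite big1 // => l _; rewrite mxE (introF eqP ai) mul0r.
rewrite (bigD1 i) //= mxE !eqxx mul1r big1 ?addr0 // => l li.
by rewrite mxE (negbTE li) andbF mul0r.
Qed.

Lemma mul_delta_complE Y a b :
  ((1%:M - delta_mx i i) *m Y) a b = if a == i then 0 else Y a b.
Proof.
move: (mul_delta_diagE Y a b); rewrite mulmxBl mul1mx !mxE => ->.
by case: eqP => [->|_]; rewrite ?subrr ?subr0.
Qed.

Definition rowcomb_mx c : 'M[R]_n :=
  \matrix_(a, b) if a == i then c 0 b else (a == b)%:R.

Lemma mul_rowcomb_mxE c Y a b :
  (rowcomb_mx c *m Y) a b = if a == i then (c *m Y) 0 b else Y a b.
Proof.
rewrite !mxE; case: eqP => ai; first by apply: eq_bigr => l _; rewrite mxE ai eqxx.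
rewrite (bigD1 a) //= mxE (introF eqP ai) eqxx mul1r big1 ?addr0 // => l la.
by rewrite mxE (introF eqP ai) eq_sym (negbTE la) mul0r.
Qed.

Lemma rowcomb_mx_unit c : c 0 i != 0 -> rowcomb_mx c \in unitmx.
Proof.
move=> ci0; rewrite unitmxE unitfE; apply/negP => /det0P [v v0 vc0].
have v_rowcomb b : (v *m rowcomb_mx c) 0 b = v 0 i * c 0 b + (b != i)%:R * v 0 b.
  rewrite mxE (bigD1 i) //= mxE eqxx; congr (_ + _).
  case: eqP => [->|bi]; rewrite ?mul0r ?mul1r.
    by rewrite big1 // => a ai; rewrite mxE (negbTE ai) mulr0.
  rewrite (bigD1 b) /=; last by rewrite (introF eqP bi).
  rewrite mxE (introF eqP bi) eqxx mulr1 big1 ?addr0 // => a /andP [ai ab].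
  by rewrite mxE (negbTE ai) (negbTE ab) mulr0.
have vi0 : v 0 i = 0.
  move: (v_rowcomb i); rewrite vc0 mxE eqxx mul0r addr0 => /esym/eqP.
  by rewrite mulf_eq0 (negbTE ci0) orbF => /eqP.
move/eqP: v0; apply; apply/matrixP => z b; rewrite (ord1 z) mxE.
move: (v_rowcomb b); rewrite vc0 vi0 mul0r add0r mxE.
by case: eqP => [->|_] //; rewrite mul1r.
Qed.

End RowOperations.

Section OreReduction.
Variables (K : fieldType) (s si : {rmorphism K -> K}).
Hypotheses (sK : cancel s si) (siK : cancel si s).

Definition spow_rm (k : int) : {rmorphism K -> K} :=
  match k with Posz m => iter_rmorph s m | Negz m => iter_rmorph si m.+1 end.

Lemma spow_rmE k x : spow s si k x = spow_rm k x.
Proof. by case: k => m /=; rewrite iter_rmorphE. Qed.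

Lemma spow_rmS k x : spow_rm (k + 1) x = s (spow_rm k x).
Proof.
case: k => [m|[|m]].
- by rewrite -PoszD addn1.
- by rewrite /= siK.
- have -> : Negz m.+1 + 1 = Negz m by rewrite !NegzE; lia.
  by rewrite /= siK.
Qed.

Lemma spow_rmD a b x : spow_rm (a + b) x = spow_rm a (spow_rm b x).
Proof.
have spow_rmB1 k y : spow_rm (k - 1) y = si (spow_rm k y).
  by rewrite -[in RHS](subrK 1 k) spow_rmS sK.
case: a => m; elim: m => [|m IH].
- by rewrite add0r.
- by rewrite -addn1 PoszD addrAC spow_rmS IH -spow_rmS.
- by rewrite NegzE addrC spow_rmB1.
- have -> : Negz m.+1 = Negz m - 1 by rewrite !NegzE; lia.
  by rewrite addrAC !spow_rmB1 IH.
Qed.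

Variable n : nat.
Local Notation M := 'M[K]_n.
Local Notation shiftmx k := (map_mx (spow_rm k)).

Lemma shiftmx0 (X : M) : shiftmx 0 X = X.
Proof. exact: map_mx_id. Qed.

Lemma shiftmxD a b (X : M) : shiftmx a (shiftmx b X) = shiftmx (a + b) X.
Proof. by apply/matrixP => i j; rewrite !mxE spow_rmD. Qed.

(* An element [sum_k lp_cf k sigma^k] of [K[sigma, sigma^-1]^(n x n)] together
   with a window [lp_lo, lp_lo + lp_len) containing its support; such elements
   are compared through [lp_cf], i.e. extensionally. *)
Record lpmx := LPMx {
  lp_cf : int -> M; lp_lo : int; lp_len : nat;
  lp_supp : supported_in lp_lo lp_len lp_cf }.
Arguments lp_supp : clear implicits.

Implicit Types f g h U V W X : lpmx.

(* By the Ore rule [(f_j sigma^j) (g_m sigma^m) = f_j sigma^j(g_m) sigma^(j+m)],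
   this is the contribution of [f_j] to the coefficient of [sigma^k] in [f g]. *)
Definition lp_term f g k j := lp_cf f j *m shiftmx j (lp_cf g (k - j)).

Lemma lp_mul_supp f g : supported_in (lp_lo f + lp_lo g) (lp_len f + lp_len g)
  (fun k => wsum (lp_lo f) (lp_len f) (lp_term f g k)).
Proof.
move=> k k_out; rewrite /wsum big1 // => i _.
rewrite /lp_term (lp_supp g) ?map_mx0 ?mulmx0 //.
by move: k_out (ltn_ord i); case: g => /= ? lo len _; lia.
Qed.

Definition lp_mul f g := LPMx (@lp_mul_supp f g).

Lemma lp_mulE f g k a N : supported_in a N (lp_term f g k) ->
  lp_cf (lp_mul f g) k = wsum a N (lp_term f g k).
Proof.
move=> supp_term; apply: wsum_supported => // j j_out.
by rewrite /lp_term lp_supp // mul0mx.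
Qed.

Lemma lp_mul_congr f f' g g' : lp_cf f =1 lp_cf f' -> lp_cf g =1 lp_cf g' ->
  lp_cf (lp_mul f g) =1 lp_cf (lp_mul f' g').
Proof.
move=> eq_f eq_g k; rewrite (@lp_mulE f' g' k (lp_lo f) (lp_len f)).
  by apply: eq_bigr => i _; rewrite /lp_term eq_f eq_g.
by move=> j j_out; rewrite /lp_term -eq_f lp_supp // mul0mx.
Qed.

Lemma lp_mul_congrl f f' g : lp_cf f =1 lp_cf f' ->
  lp_cf (lp_mul f g) =1 lp_cf (lp_mul f' g).
Proof. by move=> eq_f; apply: lp_mul_congr. Qed.

Lemma lp_mul_congrr f g g' : lp_cf g =1 lp_cf g' ->
  lp_cf (lp_mul f g) =1 lp_cf (lp_mul f g').
Proof. exact: lp_mul_congr. Qed.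

Lemma lp_mon_supp (P : M) (e : int) :
  supported_in e 1 (fun k => if k == e then P else 0).
Proof. by move=> k k_out; case: eqP => // ke; move: k_out; rewrite ke; lia. Qed.

Definition lp_mon P e := LPMx (@lp_mon_supp P e).
Definition lp_one := lp_mon 1%:M 0.

Lemma lp_mul_monl P e g k :
  lp_cf (lp_mul (lp_mon P e) g) k = P *m shiftmx e (lp_cf g (k - e)).
Proof. by rewrite /= /wsum big_ord1 /lp_term /= addr0 eqxx. Qed.

Lemma lp_mul1 g : lp_cf (lp_mul lp_one g) =1 lp_cf g.
Proof. by move=> k; rewrite lp_mul_monl subr0 shiftmx0 mul1mx. Qed.

Lemma lp_mulr1 f : lp_cf (lp_mul f lp_one) =1 lp_cf f.
Proof.
move=> k; rewrite (@lp_mulE _ _ k k 1).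
  by rewrite /wsum big_ord1 /lp_term /= addr0 subrr eqxx map_mx1 mulmx1.
move=> j j_out; rewrite /lp_term /=.
have -> : (k - j == 0) = false by apply/negbTE; move: j_out; lia.
by rewrite map_mx0 mulmx0.
Qed.

Lemma lp_mulA f g h :
  lp_cf (lp_mul (lp_mul f g) h) =1 lp_cf (lp_mul f (lp_mul g h)).
Proof.
move=> k; rewrite /= /wsum /lp_term /=.
under eq_bigr do rewrite mulmx_suml.
rewrite exchange_big /=; apply: eq_bigr => i _.
rewrite map_mx_sum mulmx_sumr.
set i' := lp_lo f + i%:Z.
transitivity (wsum (i' + lp_lo g) (lp_len g) (fun j =>
    lp_cf f i' *m shiftmx i' (lp_cf g (j - i')) *m shiftmx j (lp_cf h (k - j)))).
  rewrite -(@wsum_widen _ (i' + lp_lo g) (lp_len g)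
              (lp_lo f + lp_lo g) (lp_len f + lp_len g)) //.
  - by move=> j j_out; rewrite (lp_supp g) ?map_mx0 ?mulmx0 ?mul0mx //; lia.
  - by rewrite /i'; lia.
  - by move: (ltn_ord i); rewrite /i'; lia.
apply: eq_bigr => j _.
rewrite map_mxM shiftmxD -mulmxA addrA.
by congr (_ *m (map_mx _ (lp_cf g _) *m map_mx _ (lp_cf h _))); lia.
Qed.

Definition lp_unit U := exists W,
  lp_cf (lp_mul U W) =1 lp_cf lp_one /\ lp_cf (lp_mul W U) =1 lp_cf lp_one.

Lemma lp_unitM U V : lp_unit U -> lp_unit V -> lp_unit (lp_mul U V).
Proof.
have inv_mul X X' Y Y' : lp_cf (lp_mul X X') =1 lp_cf lp_one ->
    lp_cf (lp_mul Y Y') =1 lp_cf lp_one ->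
    lp_cf (lp_mul (lp_mul X Y) (lp_mul Y' X')) =1 lp_cf lp_one.
  move=> XX' YY' k; rewrite lp_mulA (lp_mul_congrr X (fsym (lp_mulA Y Y' X')) k).
  rewrite (lp_mul_congrr X (lp_mul_congrl X' YY') k).
  by rewrite (lp_mul_congrr X (lp_mul1 X') k).
move=> [U' [UU' U'U]] [V' [VV' V'V]].
by exists (lp_mul V' U'); split; apply: inv_mul.
Qed.

Lemma lp_mul0l X Y : lp_cf X =1 (fun _ => 0) -> lp_cf (lp_mul X Y) =1 (fun _ => 0).
Proof. by move=> X0 k; rewrite /= /wsum big1 // => i _; rewrite /lp_term X0 mul0mx. Qed.

Lemma lp_unit_const P : P \in unitmx -> lp_unit (lp_mon P 0).
Proof.
move=> P_unit; exists (lp_mon (invmx P) 0).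
by split=> k; rewrite lp_mul_monl shiftmx0 /= subr0;
  case: eqP; rewrite ?mulmx0 ?mulmxV ?mulVmx.
Qed.

Lemma lp_of_lmat_supp (V : lmat K n) :
  supported_in (lm_lo V) (size (lm_cf V)) (lcoef V).
Proof.
move=> k k_out; rewrite /lcoef; case: ifP => // le_lo_k.
by rewrite nth_default //; move: k_out le_lo_k; move: (size _) (lm_lo V) => m l; lia.
Qed.

Definition lp_of_lmat (V : lmat K n) := LPMx (@lp_of_lmat_supp V).

Definition lmat_of_lp f : lmat K n :=
  LMat (lp_lo f) (mkseq (fun i => lp_cf f (lp_lo f + i%:Z)) (lp_len f)).

Lemma lmat_of_lpK f : lp_cf (lp_of_lmat (lmat_of_lp f)) =1 lp_cf f.
Proof.
move=> k; rewrite /= /lcoef /=; case: ifP => le_lo_k; last by rewrite lp_supp //; lia.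
have [k_in|k_out] := ltnP `|k - lp_lo f|%N (lp_len f).
  by rewrite nth_mkseq //; congr (lp_cf f); lia.
by rewrite nth_default ?size_mkseq // lp_supp //; lia.
Qed.

Lemma lmul_coefE (V W : lmat K n) k :
  lmul_coef s si V W k = lp_cf (lp_mul (lp_of_lmat V) (lp_of_lmat W)) k.
Proof.
rewrite /lmul_coef /= /wsum /lp_term /=; apply: eq_bigr => i _.
have -> : lcoef V (lm_lo V + i%:Z) = nth 0 (lm_cf V) i.
  by rewrite /lcoef ifT; [congr nth|]; move: (lm_lo V) => l; lia.
by congr (_ *m _); apply/matrixP => a b; rewrite !mxE spow_rmE.
Qed.

Section RowShift.
Variable i : 'I_n.
Local Notation D := (delta_mx i i : M).

(* [D sigma^e + (1 - D)]: applies [sigma^e] to the [i]-th row only. *)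
Lemma lp_rowshift_supp e : supported_in (e - `|e|%N%:Z) (2 * `|e| + 1)
  (fun k => (if k == e then D else 0) + (if k == 0 then 1%:M - D else 0)).
Proof.
move=> k k_out; have -> : (k == e) = false by apply/negbTE; move: k_out; lia.
have -> : (k == 0) = false by apply/negbTE; move: k_out; lia.
by rewrite addr0.
Qed.

Definition lp_rowshift e := LPMx (@lp_rowshift_supp e).

Lemma lp_mul_rowshift e G k : lp_cf (lp_mul (lp_rowshift e) G) k =
  D *m shiftmx e (lp_cf G (k - e)) + (1%:M - D) *m lp_cf G k.
Proof.
rewrite /=; under eq_wsum do rewrite /lp_term mulmxDl.
rewrite wsumD (@wsum_single _ _ _ e) ?(@wsum_single _ _ _ 0); try lia.
- by rewrite !eqxx subr0 shiftmx0.
- by move=> j /negbTE ->; rewrite mul0mx.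
- by move=> j /negbTE ->; rewrite mul0mx.
Qed.

Lemma lp_mul_rowshiftE e G k a b : lp_cf (lp_mul (lp_rowshift e) G) k a b =
  if a == i then spow_rm e (lp_cf G (k - e) i b) else lp_cf G k a b.
Proof.
rewrite lp_mul_rowshift mxE mul_delta_diagE mul_delta_complE mxE.
by case: (a == i); rewrite ?addr0 ?add0r.
Qed.

Lemma lp_rowshiftK e G :
  lp_cf (lp_mul (lp_rowshift e) (lp_mul (lp_rowshift (- e)) G)) =1 lp_cf G.
Proof.
move=> k; apply/matrixP => a b; rewrite !lp_mul_rowshiftE.
by case: eqP => [->|_] //; rewrite eqxx -spow_rmD opprK subrK subrr.
Qed.

Lemma lp_unit_rowshift e : lp_unit (lp_rowshift e).
Proof.
have rowshift_inv e' :
    lp_cf (lp_mul (lp_rowshift e') (lp_rowshift (- e'))) =1 lp_cf lp_one.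
  by move=> k; rewrite -(lp_mul_congrr _ (lp_mulr1 _) k) lp_rowshiftK.
exists (lp_rowshift (- e)); split; first exact: rowshift_inv.
by move: (rowshift_inv (- e)); rewrite opprK.
Qed.

End RowShift.

Section Reduction.
Variable A : seq M.
Hypotheses (A_nonempty : (0 < size A)%N) (A_head : \det (last 0 A) != 0).
Local Notation l := (size A).-1.

Definition lpA := lp_of_lmat (ore_mat A).

Lemma lpA_cf_gt k : l%:Z < k -> lp_cf lpA k = 0.
Proof.
move=> lt_l_k; rewrite /= /lcoef /= subr0; case: ifP => // k_ge0.
by rewrite nth_default //; move: lt_l_k k_ge0 A_nonempty; move: (size A) => m; lia.
Qed.

Lemma lp_mul_lpA_top X k : (forall j, k < j -> lp_cf X j = 0) ->
  lp_cf (lp_mul X lpA) (k + l%:Z) = lp_cf X k *m shiftmx k (last 0 A).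
Proof.
move=> X_gt; rewrite (@lp_mulE _ _ _ k 1).
  by rewrite /wsum big_ord1 /lp_term addr0 addrAC subrr add0r /= /lcoef /= addn0 nth_last.
move=> j j_out; rewrite /lp_term; have [lt_kj|le_jk] := ltP k j.
  by rewrite X_gt ?mul0mx.
by rewrite lpA_cf_gt ?map_mx0 ?mulmx0 //; move: j_out le_jk; lia.
Qed.

(* The leading coefficient of [A] is invertible, so the top coefficient of [X]
   survives in [X A]. *)
Lemma lp_mul_lpA_eq0 X :
  lp_cf (lp_mul X lpA) =1 (fun _ => 0) -> lp_cf X =1 (fun _ => 0).
Proof.
move=> XA0.
suff vanish_above d k : lp_lo X + (lp_len X - d)%N%:Z <= k -> lp_cf X k = 0.
  move=> k; have [lt_k_lo|] := ltP k (lp_lo X); first by rewrite lp_supp //; lia.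
  by move=> le_lo_k; apply: (vanish_above (lp_len X)); rewrite subnn addr0.
elim: d k => [|d IH] k le_k; first by rewrite lp_supp //; lia.
have [/IH //|lt_k] := leP (lp_lo X + (lp_len X - d)%N%:Z) k.
have head_unit : shiftmx k (last 0 A) \in unitmx.
  by rewrite unitmxE det_map_mx unitfE fmorph_eq0.
rewrite -(mulmxK head_unit (lp_cf X k)) -lp_mul_lpA_top ?XA0 ?mul0mx // => j lt_kj.
by apply: IH; lia.
Qed.

Definition unimod_rowdeg_le U (t : 'I_n -> nat) :=
  [/\ lp_unit U, forall k, k < 0 -> lp_cf (lp_mul U lpA) k = 0
    & forall a k b, (t a)%:Z < k -> lp_cf (lp_mul U lpA) k a b = 0].

Lemma unimod_rowdeg_le_one : unimod_rowdeg_le lp_one (fun _ => l).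
Proof.
split.
- by exists lp_one; split; apply: lp_mul1.
- by move=> k k_neg; rewrite lp_mul1 /= /lcoef /=; case: ifP => //; lia.
- by move=> a k b lt_l_k; rewrite lp_mul1 lpA_cf_gt // mxE.
Qed.

Lemma unimod_rowdeg_le_rowcomb U t (c : 'rV[K]_n) i : unimod_rowdeg_le U t ->
  c *m lp_cf (lp_mul U lpA) 0 = 0 -> c 0 i != 0 ->
  (forall j, c 0 j != 0 -> (t j <= t i)%N) ->
  unimod_rowdeg_le (lp_mul (lp_mon (rowcomb_mx i c) 0) U) t /\
  forall b, lp_cf (lp_mul (lp_mul (lp_mon (rowcomb_mx i c) 0) U) lpA) 0 i b = 0.
Proof.
move=> [U_unit UA_neg UA_deg] cB0 ci0 ti_max.
have U1E k a b : lp_cf (lp_mul (lp_mul (lp_mon (rowcomb_mx i c) 0) U) lpA) k a b =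
    if a == i then (c *m lp_cf (lp_mul U lpA) k) 0 b else lp_cf (lp_mul U lpA) k a b.
  by rewrite lp_mulA lp_mul_monl subr0 shiftmx0 mul_rowcomb_mxE.
split; [split|].
- by apply: lp_unitM => //; apply/lp_unit_const/rowcomb_mx_unit.
- move=> k k_neg; apply/matrixP => a b.
  by rewrite U1E UA_neg // mulmx0 !mxE; case: ifP.
- move=> a k b lt_k; rewrite U1E; case: eqP => [ai|_]; last exact: UA_deg.
  rewrite mxE big1 // => j _; have [->|cj0] := eqVneq (c 0 j) 0; first by rewrite mul0r.
  by rewrite UA_deg ?mulr0 //; move: (ti_max j cj0) lt_k; rewrite ai; lia.
- by move=> b; rewrite U1E eqxx cB0 mxE.
Qed.

(* Row [i] of [U A] is nonzero, as [U] is a unit and [A] is left regular; if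
   its constant term vanishes, its degree is therefore positive. *)
Lemma unimod_rowdeg_le_row0_pos U t i : unimod_rowdeg_le U t ->
  (forall b, lp_cf (lp_mul U lpA) 0 i b = 0) -> (0 < t i)%N.
Proof.
move=> [[W [UW _]] UA_neg UA_deg] row0; case: (posnP (t i)) => // ti0; exfalso.
have rowUA0 : lp_cf (lp_mul (lp_mul (lp_mon (delta_mx i i) 0) U) lpA) =1 (fun _ => 0).
  move=> k; rewrite lp_mulA lp_mul_monl subr0 shiftmx0; apply/matrixP => a b.
  rewrite mul_delta_diagE mxE; case: (a == i) => //.
  case: (ltgtP k 0) => [k_neg|k_pos|->]; last exact: row0.
    by rewrite UA_neg ?mxE.
  by rewrite UA_deg // ti0.
move: (lp_mul0l W (lp_mul_lpA_eq0 rowUA0) 0).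
rewrite lp_mulA (lp_mul_congrr _ UW 0) lp_mulr1 /=.
by move/matrixP => /(_ i i); rewrite !mxE !eqxx => /eqP; rewrite oner_eq0.
Qed.

Lemma unimod_rowdeg_le_rowshift U t i : unimod_rowdeg_le U t ->
  (forall b, lp_cf (lp_mul U lpA) 0 i b = 0) -> (0 < t i)%N ->
  unimod_rowdeg_le (lp_mul (lp_rowshift i (-1)) U)
                   (fun j => if j == i then (t i).-1 else t j).
Proof.
move=> [U_unit UA_neg UA_deg] row0 ti_pos.
have U2E k a b : lp_cf (lp_mul (lp_mul (lp_rowshift i (-1)) U) lpA) k a b =
    if a == i then spow_rm (-1) (lp_cf (lp_mul U lpA) (k + 1) i b)
    else lp_cf (lp_mul U lpA) k a b.
  by rewrite lp_mulA lp_mul_rowshiftE opprK.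
split.
- exact: lp_unitM (lp_unit_rowshift _ _) U_unit.
- move=> k k_neg; apply/matrixP => a b; rewrite U2E mxE.
  case: eqP => _; last by rewrite UA_neg ?mxE.
  have [->|k1] := eqVneq (k + 1) 0; first by rewrite row0 rmorph0.
  by rewrite UA_neg ?mxE ?rmorph0 //; lia.
- move=> a k b /=; rewrite U2E; case: eqP => _ lt_k; last exact: UA_deg.
  by rewrite UA_deg ?rmorph0 //; lia.
Qed.

Lemma unimod_rowdeg_le_decrease U t : unimod_rowdeg_le U t ->
  \det (lp_cf (lp_mul U lpA) 0) == 0 ->
  exists U' t', unimod_rowdeg_le U' t' /\ (\sum_a t' a < \sum_a t a)%N.
Proof.
move=> Ut /det0P [c c_neq0 cB0].
have [j cj0] : exists j, c 0 j != 0.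
  apply/existsP; apply: contraNT c_neq0 => /existsPn c0.
  by apply/eqP/rowP => j; rewrite mxE; apply/eqP/negPn.
case: (@arg_maxnP _ j (fun j => c 0 j != 0) t cj0) => i ci0 ti_max.
have [U1t row0] := unimod_rowdeg_le_rowcomb Ut cB0 ci0 ti_max.
have ti_pos := unimod_rowdeg_le_row0_pos U1t row0.
eexists; eexists; split; first exact: unimod_rowdeg_le_rowshift U1t row0 ti_pos.
rewrite [ltnRHS](bigD1 i) // [ltnLHS](bigD1 i) //= eqxx.
by rewrite (eq_bigr t) => [|a /negbTE -> //]; rewrite ltn_add2r; lia.
Qed.

Lemma lp_mul_lpA_reduced : exists V (L : nat), lp_unit V /\
  (forall k, (k < 0) || (L%:Z < k) -> lp_cf (lp_mul V lpA) k = 0) /\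
  \det (lp_cf (lp_mul V lpA) 0) != 0.
Proof.
suff reduce m U t : (\sum_a t a < m)%N -> unimod_rowdeg_le U t -> exists V (L : nat),
    lp_unit V /\ (forall k, (k < 0) || (L%:Z < k) -> lp_cf (lp_mul V lpA) k = 0) /\
    \det (lp_cf (lp_mul V lpA) 0) != 0.
  exact: reduce (ltnSn _) unimod_rowdeg_le_one.
elim: m U t => [//|m IH] U t lt_m Ut.
have [det0|det_neq0] := boolP (\det (lp_cf (lp_mul U lpA) 0) == 0).
  have [U' [t' [U't' lt_t']]] := unimod_rowdeg_le_decrease Ut det0.
  by apply: (IH U' t') => //; lia.
case: Ut => U_unit UA_neg UA_deg; exists U, (\sum_a t a).
split=> //; split=> // k /orP [/UA_neg //|lt_k]; apply/matrixP => a b.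
rewrite UA_deg ?mxE //; apply: le_lt_trans lt_k.
by rewrite lez_nat (bigD1 a) //= leq_addr.
Qed.

End Reduction.

Lemma lmul_coef_lmat_of_lp V (W : lmat K n) k :
  lmul_coef s si (lmat_of_lp V) W k = lp_cf (lp_mul V (lp_of_lmat W)) k.
Proof. by rewrite lmul_coefE (lp_mul_congrl _ (lmat_of_lpK V)). Qed.

Lemma lp_unit_unimodular V : lp_unit V -> unimodular s si (lmat_of_lp V).
Proof.
move=> [W [VW WV]]; exists (lmat_of_lp W).
by split=> k; rewrite lmul_coef_lmat_of_lp (lp_mul_congrr _ (lmat_of_lpK _)).
Qed.

End OreReduction.

Theorem mainTheorem6 (F : fieldType) (sigma0 sigma0i : {rmorphism F -> F})
  (sigma sigmai : {rmorphism ratfun F -> ratfun F}) (n : nat)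
  (A : seq 'M[ratfun F]_n) :
  difference_field sigma0 sigma0i ->
  PiSigma_ext sigma0 sigma sigmai ->
  (0 < size A)%N ->
  \det (last 0 A) != 0 ->
  exists (ltil : nat) (V : lmat (ratfun F) n),
    unimodular sigma sigmai V /\
    (forall k : int, (k < 0) || (ltil%:Z < k) ->
       lmul_coef sigma sigmai V (ore_mat A) k = 0) /\
    \det (lmul_coef sigma sigmai V (ore_mat A) 0) != 0.
Proof.
move=> _ [sK siK _ _ _] A_nonempty A_head.
have [V [L [V_unit [VA_out VA0]]]] := lp_mul_lpA_reduced sK siK A_nonempty A_head.
exists L, (lmat_of_lp V); split; first exact: lp_unit_unimodular.
by split=> [k /VA_out|]; rewrite lmul_coef_lmat_of_lp.
Qed.
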